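(* Let $M$ be a rational $\mathbb G_a$-module over $k$ of degree $<p^r$. Then for any finite sequence $\underline a=(a_0,a_1,\dots)$ in $k$, with $\underline b=(b_0,\dots,b_{r-1}):=(a_{r-1},\dots,a_0)$, the action of $\sum_{s\ge0}a_s^{p^s}u_s$ on $M$ equals the action of $\sum_{i=0}^{r-1}b_{r-1-i}^{p^i}u_i$ on $M$; the latter element of $k\mathbb G_{a(r)}=k[u_0,\dots,u_{r-1}]/(u_i^p)$ is the sum of the terms linear in the $u_i$ of $(\sigma_{\underline b}\circ i_r)_*(u_{r-1})$. In other words, the action of $\mathbb G_a$ on $M$ at $\sigma_{\underline a}$ equals the linearization of the action of $\mathbb G_{a(r)}$ on $M$ at $\sigma_{\underline b}\circ i_r$.
   Context: $k$ is an algebraically closed field of characteristic $p>0$. $\mathbb G_a$ is the additive group, $k[\mathbb G_a]=k[T]$; $\mathbb G_{a(r)}$ its $r$-th Frobenius kernel, $k[\mathbb G_{a(r)}]=k[T]/(T^{p^r})$, inclusion $i_r$. $k\mathbb G_a=k[u_0,u_1,\dots]/(u_i^p)$ with $u_i$ the functional reading off the coefficient of $T^{p^i}$; $k\mathbb G_{a(r)}=k[u_0,\dots,u_{r-1}]/(u_i^p)$; a homomorphism $\psi$ induces $\psi_*$ on group algebras. A rational $\mathbb G_a$-module is a comodule $\Delta_M:M\to M\otimes k[T]$, a $k\mathbb G_a$-module via $\phi\cdot m=\sum\phi(f_i)m_i$ when $\Delta_M(m)=\sum m_i\otimes f_i$; degree $<p^r$ means $\Delta_M(M)\subset M\otimes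 k[T]_{<p^r}$. For a finite sequence $\underline a$, $\sigma_{\underline a}:\mathbb G_a\to\mathbb G_a$ is $T\mapsto\sum_sa_sT^{p^s}$. The action of $\mathbb G_a$ on $M$ at $\sigma_{\underline a}$ is that of $\sum_sa_s^{p^s}u_s$; the action of $\mathbb G_{a(r)}$ on $M$ at $\mu:\mathbb G_{a(r)}\to\mathbb G_a$ is that of $\mu_*(u_{r-1})$. *)

From HB Require Import structures.
From mathcomp Require Import all_boot all_algebra.
Set Implicit Arguments. Unset Strict Implicit. Unset Printing Implicit Defensive.
Import GRing.Theory.
Local Open Scope ring_scope.

(* Conventions:
   - k[G_a] = k[T] with basis T^j.  An element phi of the group algebra
     kG_a (a k-linear functional on k[T]) is encoded by its values on the
     basis: phi : nat -> k, phi j = phi(T^j).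
   - An element of kG_{a(r)} (functional on k[T]/(T^{p^r})) is encoded the
     same way; only its values at j < p^r are used.
   - The product of kG_a is dual to the coproduct T^n |-> sum_i C(n,i) T^i (x) T^(n-i). *)

Section Defs.
Variable k : fieldType.
Variable p : nat.

Definition dist := nat -> k.

Definition u (i : nat) : dist := fun j => ((j == p ^ i)%N)%:R.

Definition dunit : dist := fun j => ((j == 0)%N)%:R.
Definition dmul (f g : dist) : dist :=
  fun n => \sum_(i < n.+1) ('C(n, i))%:R * f i * g (n - i)%N.
Definition dpow (f : dist) (e : nat) : dist := iter e (dmul f) dunit.

Definition umon (r : nat) (l : {ffun 'I_r -> 'I_p}) : dist :=
  \big[dmul/dunit]_(i < r) dpow (u i) (l i).

Definition linear_at (r : nat) (l : {ffun 'I_r -> 'I_p}) (i : 'I_r) : bool :=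
  [forall j, (l j : nat) == (j == i : nat)].

Definition sigma_poly (b : seq k) : {poly k} :=
  \sum_(s < size b) b`_s *: 'X^(p ^ s).

(* (sigma_b o i_r)_* : kG_{a(r)} -> kG_a.  The comorphism is
   f |-> f(sigma_b(T)) mod T^(p^r), so
   (sigma_b o i_r)_*(phi)(T^n) = phi((sigma_b(T))^n mod T^(p^r)). *)
Definition push_sigma_ir (r : nat) (b : seq k) (phi : dist) : dist :=
  fun n => \sum_(j < p ^ r) phi j * ((sigma_poly b) ^+ n)`_j.

Definition elt_sigma (a : seq k) : dist :=
  fun j => \sum_(s < size a) a`_s ^+ (p ^ s) * u s j.

(* b = (a_{r-1}, ..., a_0)  (a padded with zeros if shorter than r) *)
Definition bseqrev (a : seq k) (r : nat) : seq k :=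
  [seq nth 0 a (r.-1 - i) | i <- iota 0 r].

End Defs.

(* Rational G_a-module: comodule M -> M (x) k[T], m |-> sum_j (coef j m) (x) T^j,
   encoded by the list of coefficients. *)
Record rGaMod (k : fieldType) (M : lmodType k) := RGaMod {
  comod : M -> seq M;
  coef := fun (j : nat) (m : M) => nth 0 (comod m) j;
  coef_linear : forall j (a : k) (x y : M),
      coef j (a *: x + y) = a *: coef j x + coef j y;
  coef_counit : forall m, coef 0 m = m;
  coef_coassoc : forall i j m,
      coef i (coef j m) = ('C(i + j, i))%:R *: coef (i + j) m
}.

Section Act.
Variables (k : fieldType) (M : lmodType k) (D : rGaMod M).

Definition coefD (j : nat) (m : M) : M := nth 0 (comod D m) j.

Definition act (phi : dist k) (m : M) : M :=
  \sum_(j < size (comod D m)) phi j *: coefD j m.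

Definition deg_lt (N : nat) : Prop :=
  forall m j, (N <= j)%N -> coefD j m = 0.

End Act.

From HB Require Import structures.
From mathcomp Require Import all_boot all_algebra.
From mathcomp Require Import zify.
From Stdlib Require Import FunctionalExtensionality.
Set Implicit Arguments.
Unset Strict Implicit.
Unset Printing Implicit Defensive.
Import GRing.Theory.
Local Open Scope ring_scope.

(* Identify an element of kG_a with its values on the monomials T^n, and write
   delta_n for the dual basis.  Lucas' theorem gives u_i^e = e! delta_(e p^i), and
   shows that multiplying such elements with disjoint base-p digits produces no
   binomial factor, so u_0^l_0 ... u_(r-1)^l_(r-1) = (prod_j l_j!) delta_n with
   n = sum_j l_j p^j.  Since the digit expansion is a bijection onto [0, p^r),
   these monomials form a basis of kG_(a(r)), and the coordinate of phi on the
   linear monomial u_i is phi(T^(p^i)).  For phi = (sigma_b o i_r)_*(u_(r-1))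
   this is the coefficient of T^(p^(r-1)) in sigma_b(T)^(p^i) =
   sum_s b_s^(p^i) T^(p^(s+i)), namely b_(r-1-i)^(p^i).  The first claim holds
   since the two elements of kG_a agree on T^j for j < p^r, which is all that a
   module of degree < p^r sees. *)

Section PointDistributions.
Variable k : fieldType.

Definition dpt (n : nat) (x : k) : dist k := fun j => if j == n then x else 0.

Lemma dunit_dpt : dunit k = dpt 0 1.
Proof. by apply: functional_extensionality => j; rewrite /dunit /dpt; case: eqP. Qed.

Lemma dmul_dpt m n x y :
  dmul (dpt m x) (dpt n y) = dpt (m + n)%N ('C(m + n, m)%:R * x * y).
Proof.
apply: functional_extensionality => j; rewrite /dmul /dpt.
rewrite (eq_bigr (fun i : 'I_j.+1 =>
  if i == m :> nat then 'C(j, m)%:R * x * (if (j - i)%N == n then y else 0) else 0));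
  last by move=> i _; case: eqP => [->|]; rewrite ?mulr0 ?mul0r.
rewrite -big_mkcond /=.
rewrite (big_ord1_eq _ (fun i => 'C(j, m)%:R * x * (if (j - i)%N == n then y else 0))).
have [->|ne_j] := eqVneq j (m + n)%N; first by rewrite ltnS leq_addr addKn eqxx.
case: ifP => // lt_m_j; case: eqP => [sub_jm|]; last by rewrite mulr0.
by move: ne_j; rewrite -sub_jm subnKC ?eqxx // -ltnS.
Qed.

End PointDistributions.

Lemma coef_XaddC1_expr (R : nzRingType) n m : (('X + 1 : {poly R}) ^+ n)`_m = 'C(n, m)%:R.
Proof.
rewrite exprD1n coef_sum (eq_bigr (fun i : 'I_n.+1 =>
  if i == m :> nat then 'C(n, i)%:R else 0 : R)); last first.
  by move=> i _; rewrite coefMn coefXn eq_sym; case: eqP; rewrite ?mul0rn ?mulr1n.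
rewrite -big_mkcond /= (big_ord1_eq _ (fun i => 'C(n, i)%:R)).
by case: ltnP => // lt_n_m; rewrite bin_small.
Qed.

Section Digits.
Local Open Scope nat_scope.
Variable p : nat.
Hypothesis p_gt0 : 0 < p.

Lemma digits_sum_lt r (d : 'I_r -> nat) :
  (forall j, d j < p) -> \sum_(j < r) d j * p ^ j < p ^ r.
Proof.
elim: r d => [|r IHr] d lt_d; first by rewrite big_ord0.
rewrite big_ord_recr /= expnS.
have := IHr _ (fun j => lt_d (widen_ord (leqnSn r) j)); have := lt_d ord_max.
rewrite /=; nia.
Qed.

Lemma digits_sum_inj r (d d' : 'I_r -> nat) :
  (forall j, d j < p) -> (forall j, d' j < p) ->
  \sum_(j < r) d j * p ^ j = \sum_(j < r) d' j * p ^ j -> d =1 d'.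
Proof.
elim: r d d' => [|r IHr] d d' lt_d lt_d'; first by move=> _ [].
rewrite !big_ord_recr /=.
set w := widen_ord (leqnSn r).
have lt_low := digits_sum_lt (fun j => lt_d (w j)).
have lt_low' := digits_sum_lt (fun j => lt_d' (w j)).
move=> eq_sum.
have eq_top : d ord_max = d' ord_max.
  move/(congr1 (divn^~ (p ^ r))): eq_sum.
  by rewrite ![(\sum_(_ < r) _ + _)%N]addnC !divnMDl ?expn_gt0 ?p_gt0 // !divn_small // !addn0.
have eq_low : d \o w =1 d' \o w.
  apply: IHr => [j | j |]; [exact: lt_d | exact: lt_d' |].
  by apply: (@addIn (d' ord_max * p ^ r)); rewrite -{1}eq_top.
move=> j; have [lt_jr | le_rj] := ltnP j r.
  have -> : j = w (Ordinal lt_jr) by exact: val_inj.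
  exact: eq_low.
have -> : j = ord_max by apply/val_inj/eqP; rewrite eqn_leq le_rj -ltnS ltn_ord.
exact: eq_top.
Qed.

End Digits.

Section CharP.
Variables (k : fieldType) (p : nat).
Hypotheses (p_pr : prime p) (pchar_k : p \in [pchar k]).

Let p_gt0 : (0 < p)%N := prime_gt0 p_pr.
Let p_gt1 : (1 < p)%N := prime_gt1 p_pr.
Let expp_gt0 i : (0 < p ^ i)%N.
Proof. by rewrite expn_gt0 p_gt0. Qed.

Lemma pchar_nat_expp i : [pchar {poly k}].-nat (p ^ i)%N.
Proof.
have pchar_poly_k : p \in [pchar {poly k}] by rewrite pchar_poly.
by rewrite (eq_pnat _ (pcharf_eq pchar_poly_k)) pnatX pnat_id.
Qed.

(* Lucas: compare coefficients in (X + 1)^(q P + s) = (X^P + 1)^q (X + 1)^s, with P = p^i. *)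
Lemma lucas_binomial i q c s s' : (s < p ^ i)%N -> (s' < p ^ i)%N ->
  'C(q * p ^ i + s, c * p ^ i + s')%:R = ('C(q, c) * 'C(s, s'))%:R :> k.
Proof.
move=> lt_s lt_s'; set P := (p ^ i)%N.
have frobX1 : ('X + 1 : {poly k}) ^+ P = 'X^P + 1.
  by rewrite exprDn_pchar ?expr1n // pchar_nat_expp.
rewrite -coef_XaddC1_expr exprD mulnC exprM frobX1 exprD1n mulr_suml coef_sum.
rewrite (eq_bigr (fun j : 'I_q.+1 =>
  if j == c :> nat then ('C(q, j) * 'C(s, s'))%:R else 0 : k)); last first.
  move=> j _; rewrite mulrnAl coefMn -exprM coefXnM coef_XaddC1_expr.
  case: (ltngtP j c) => hjc.
  - have gap : (P * j + P <= c * P)%N by nia.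
    rewrite ifF; last by apply/negbTE; rewrite -leqNgt; lia.
    by rewrite bin_small ?mul0rn //; lia.
  - have gap : (c * P + P <= P * j)%N by nia.
    by rewrite ifT ?mul0rn //; lia.
  - rewrite hjc ifF; last by apply/negbTE; rewrite -leqNgt mulnC leq_addr.
    by rewrite mulnC addKn natrM mulr_natr -!mulrnA mulnC.
rewrite -big_mkcond /= (big_ord1_eq _ (fun j => ('C(q, j) * 'C(s, s'))%:R)).
by case: ltnP => // lt_q_c; rewrite bin_small.
Qed.

Lemma u_dpt i : u k p i = dpt (p ^ i)%N 1.
Proof. by apply: functional_extensionality => j; rewrite /u /dpt; case: eqP. Qed.

Lemma dpow_u i e : dpow (u k p i) e = dpt (e * p ^ i)%N e`!%:R.
Proof.
elim: e => [|e IHe]; first by rewrite /dpow /= dunit_dpt.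
have binS : 'C(e.+1 * p ^ i, 1 * p ^ i)%:R = e.+1%:R :> k.
  by have := lucas_binomial e.+1 1 (expp_gt0 i) (expp_gt0 i); rewrite !addn0 bin1 bin0 muln1.
rewrite /dpow iterS -/(dpow _ e) IHe u_dpt dmul_dpt -mulSn mul1n in binS *.
by rewrite binS mulr1 factS natrM.
Qed.

Lemma fact_natr_neq0 e : (e < p)%N -> e`!%:R != 0 :> k.
Proof.
rewrite -(dvdn_pcharf pchar_k); elim: e => [|e IHe] lt_e_p; first by rewrite gtnNdvd.
by rewrite factS Euclid_dvdM // negb_or gtnNdvd // IHe // ltnW.
Qed.

Lemma big_dmul_dpt i0 r (d : 'I_r -> nat) (x : 'I_r -> k) : (forall j, d j < p)%N ->
  \big[@dmul k/dunit k]_(j < r) dpt (d j * p ^ (i0 + j))%N (x j)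
    = dpt (\sum_(j < r) d j * p ^ (i0 + j))%N (\prod_(j < r) x j).
Proof.
elim: r i0 d x => [|r IHr] i0 d x lt_d; first by rewrite !big_ord0 dunit_dpt.
have pow_lift j : (i0 + lift ord0 j = i0.+1 + j :> nat)%N.
  by rewrite /= /bump leq0n add1n addnS addSn.
rewrite [in LHS]big_ord_recl (eq_bigr (fun j => dpt (d (lift ord0 j) * p ^ (i0.+1 + j))%N
  (x (lift ord0 j)))) => [|j _]; last by rewrite pow_lift.
have := IHr i0.+1 (d \o lift ord0) (x \o lift ord0) (fun j => lt_d _); rewrite /= => ->.
rewrite big_ord_recl big_ord_recl /=.
rewrite [X in dpt (_ + X)](eq_bigr (fun j : 'I_r => d (lift ord0 j) * p ^ (i0.+1 + j)))%N => [|j _];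
  last by rewrite pow_lift.
set Q := (\sum_(j < r) _)%N.
have Q_mul : Q = (\sum_(j < r) d (lift ord0 j) * p ^ j * p ^ i0.+1)%N.
  by apply: eq_bigr => j _; rewrite -mulnA -expnD addnC.
have lt_head : (d ord0 * p ^ i0 < p ^ i0.+1)%N by rewrite expnS ltn_mul2r expp_gt0 lt_d.
have binQ : 'C(d ord0 * p ^ i0 + Q, d ord0 * p ^ i0)%:R = 1 :> k.
  have := lucas_binomial (\sum_(j < r) d (lift ord0 j) * p ^ j)%N 0 lt_head lt_head.
  by rewrite big_distrl -Q_mul mul0n add0n bin0 binn addnC.
by rewrite dmul_dpt addn0 binQ mul1r.
Qed.

Definition umon_deg r (l : {ffun 'I_r -> 'I_p}) : nat := \sum_(j < r) l j * p ^ j.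

Definition umon_scale r (l : {ffun 'I_r -> 'I_p}) : k := \prod_(j < r) (l j)`!%:R.

Lemma umon_dpt r (l : {ffun 'I_r -> 'I_p}) : umon k l = dpt (umon_deg l) (umon_scale l).
Proof.
rewrite /umon (eq_bigr (fun j => dpt (l j * p ^ (0 + j))%N (l j)`!%:R)) => [|j _].
  by rewrite big_dmul_dpt.
exact: dpow_u.
Qed.

Lemma umon_scale_neq0 r (l : {ffun 'I_r -> 'I_p}) : umon_scale l != 0.
Proof. by apply/prodf_neq0 => j _; rewrite fact_natr_neq0. Qed.

Lemma umon_deg_lt r (l : {ffun 'I_r -> 'I_p}) : (umon_deg l < p ^ r)%N.
Proof. exact: digits_sum_lt. Qed.

Lemma umon_deg_inj r : injective (@umon_deg r).
Proof.
move=> l l' eq_deg; apply/ffunP => j; apply: val_inj.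
exact: (digits_sum_inj p_gt0 (fun j => ltn_ord (l j)) (fun j => ltn_ord (l' j)) eq_deg).
Qed.

Lemma umon_deg_onto r n : (n < p ^ r)%N -> exists l : {ffun 'I_r -> 'I_p}, umon_deg l = n.
Proof.
move=> lt_n; pose deg_ord l : 'I_(p ^ r) := Ordinal (umon_deg_lt l).
have deg_ord_inj : injective deg_ord by move=> l l' /(congr1 val) /umon_deg_inj.
have card_le : (#|'I_(p ^ r)| <= #|{ffun 'I_r -> 'I_p}|)%N by rewrite card_ffun !card_ord.
have /codomP[l /(congr1 val) /= ->] := inj_card_onto deg_ord_inj card_le (Ordinal lt_n).
by exists l.
Qed.

Lemma sum_umon_at_deg r (c : {ffun 'I_r -> 'I_p} -> k) l :
  \sum_l' c l' * umon k l' (umon_deg l) = c l * umon_scale l.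
Proof.
rewrite (bigD1 l) //= big1 => [|l' ne_l'l]; first by rewrite addr0 umon_dpt /dpt eqxx.
rewrite umon_dpt /dpt ifF ?mulr0 //; apply: contraNF ne_l'l => /eqP eq_deg.
by apply/eqP/umon_deg_inj.
Qed.

Lemma umon_span r (phi : dist k) : (forall n, (p ^ r <= n)%N -> phi n = 0) ->
  exists c : {ffun 'I_r -> 'I_p} -> k, forall n, phi n = \sum_l c l * umon k l n.
Proof.
move=> phi_high; exists (fun l => phi (umon_deg l) / umon_scale l) => n.
have [lt_n | le_n] := ltnP n (p ^ r).
  have [l <-] := umon_deg_onto lt_n.
  by rewrite sum_umon_at_deg divfK ?umon_scale_neq0.
rewrite phi_high // big1 // => l _; rewrite umon_dpt /dpt ifF ?mulr0 //.
by apply/negbTE; rewrite neq_ltn (leq_trans (umon_deg_lt l) le_n) orbT.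
Qed.

Lemma umon_coord r (phi : dist k) (c : {ffun 'I_r -> 'I_p} -> k) :
  (forall n, phi n = \sum_l c l * umon k l n) ->
  forall l, phi (umon_deg l) = c l * umon_scale l.
Proof. by move=> phiE l; rewrite phiE sum_umon_at_deg. Qed.

Definition ulin r (i : 'I_r) : {ffun 'I_r -> 'I_p} :=
  [ffun j => if j == i then Ordinal p_gt1 else Ordinal p_gt0].

Lemma linear_atE r (l : {ffun 'I_r -> 'I_p}) i : linear_at l i = (l == ulin i).
Proof.
apply/forallP/eqP => [l_lin | -> j]; last by rewrite /ulin ffunE; case: (j == i).
by apply/ffunP => j; apply/val_inj; rewrite /= /ulin ffunE (eqP (l_lin j)); case: (j == i).
Qed.

Lemma umon_deg_ulin r (i : 'I_r) : umon_deg (ulin i) = (p ^ i)%N.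
Proof.
rewrite /umon_deg (bigD1 i) //= big1 => [|j ne_ji]; first by rewrite ffunE eqxx mul1n addn0.
by rewrite ffunE (negbTE ne_ji) mul0n.
Qed.

Lemma umon_scale_ulin r (i : 'I_r) : umon_scale (ulin i) = 1.
Proof. by apply: big1 => j _; rewrite ffunE; case: eqP. Qed.

End CharP.

Section Sigma.
Variables (k : fieldType) (p : nat).
Hypotheses (p_pr : prime p) (pchar_k : p \in [pchar k]).

Lemma sum_mul_u (F : nat -> k) N j :
  \sum_(s < N) F s * u k p s j =
    if (j == p ^ logn p j)%N && (logn p j < N)%N then F (logn p j) else 0.
Proof.
have eq_pow s : (j == p ^ s)%N = (s == logn p j) && (j == p ^ logn p j)%N.
  by apply/eqP/andP => [->|[/eqP -> /eqP //]]; rewrite pfactorK.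
rewrite (eq_bigr (fun s : 'I_N =>
  if s == logn p j :> nat then (if (j == p ^ logn p j)%N then F s else 0) else 0)).
  rewrite -big_mkcond /= (big_ord1_eq _ (fun s => if (j == p ^ logn p j)%N then F s else 0)).
  by rewrite andbC; case: (logn p j < N)%N.
by move=> s _; rewrite /u eq_pow; case: eqP => [->|]; case: (j == _)%N; rewrite ?mulr1 ?mulr0.
Qed.

Lemma coef_sigma_poly_expr_small (b : seq k) n m : (m < n)%N -> ((sigma_poly p b) ^+ n)`_m = 0.
Proof.
move=> lt_mn; have -> : sigma_poly p b = 'X * \sum_(s < size b) b`_s *: 'X^((p ^ s).-1).
  rewrite /sigma_poly mulr_sumr; apply: eq_bigr => s _.
  by rewrite -scalerAr -exprS prednK // expn_gt0 prime_gt0.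
by rewrite exprMn coefXnM lt_mn.
Qed.

Lemma coef_sigma_poly_expr_frob (b : seq k) i m : (i <= m)%N -> (m - i < size b)%N ->
  ((sigma_poly p b) ^+ (p ^ i))`_(p ^ m) = b`_(m - i) ^+ (p ^ i).
Proof.
move=> le_im lt_mb; rewrite /sigma_poly.
have frob_sum : forall (F : 'I_(size b) -> {poly k}),
    (\sum_s F s) ^+ (p ^ i) = \sum_s F s ^+ (p ^ i).
  move=> F; apply: (big_morph (fun q : {poly k} => q ^+ (p ^ i))) => [q q'|].
    by rewrite exprDn_pchar // pchar_nat_expp.
  by rewrite expr0n expn_eq0 eqn0Ngt prime_gt0.
rewrite frob_sum coef_sum (eq_bigr (fun s : 'I_(size b) =>
  if s == (m - i)%N :> nat then b`_s ^+ (p ^ i) else 0)) => [|s _].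
  rewrite -big_mkcond /= (big_ord1_eq _ (fun s => b`_s ^+ (p ^ i))).
  by rewrite lt_mb.
rewrite exprZn -exprM -expnD coefZ coefXn eqn_exp2l ?prime_gt1 //.
have -> : (m == s + i)%N = (s == m - i :> nat)%N by apply/eqP/eqP; lia.
by case: eqP; rewrite ?mulr1 ?mulr0.
Qed.

Lemma push_sigma_ir_u r (b : seq k) j n : (j < r)%N ->
  push_sigma_ir p r b (u k p j) n = ((sigma_poly p b) ^+ n)`_(p ^ j).
Proof.
move=> lt_jr; rewrite /push_sigma_ir (eq_bigr (fun j' : 'I_(p ^ r) =>
  if j' == (p ^ j)%N :> nat then ((sigma_poly p b) ^+ n)`_j' else 0)) => [|j' _].
  rewrite -big_mkcond /= (big_ord1_eq _ (fun j' => ((sigma_poly p b) ^+ n)`_j')).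
  by rewrite ltn_exp2l ?prime_gt1 // lt_jr.
by rewrite /u; case: eqP; rewrite ?mul1r ?mul0r.
Qed.

End Sigma.

Lemma size_bseqrev (k : fieldType) (a : seq k) r : size (bseqrev a r) = r.
Proof. by rewrite size_map size_iota. Qed.

Lemma nth_bseqrev (k : fieldType) (a : seq k) r i : (i < r)%N ->
  nth 0 (bseqrev a r) (r.-1 - i) = a`_i.
Proof.
move=> lt_ir; rewrite (nth_map 0%N) ?size_iota ?nth_iota; try lia.
by congr nth; lia.
Qed.

Lemma act_eq_deg_lt (k : fieldType) (M : lmodType k) (D : rGaMod M) N (phi psi : dist k) :
  deg_lt D N -> (forall j, (j < N)%N -> phi j = psi j) -> forall m, act D phi m = act D psi m.
Proof.
move=> degD eq_low m; apply: eq_bigr => j _.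
by have [/eq_low -> // | le_Nj] := ltnP j N; rewrite degD ?scaler0.
Qed.

Lemma elt_sigma_bseqrev (k : fieldType) p (a : seq k) r j : prime p -> (j < p ^ r)%N ->
  elt_sigma p a j = \sum_(i < r) nth 0 (bseqrev a r) (r.-1 - i) ^+ (p ^ i) * u k p i j.
Proof.
move=> p_pr lt_j; rewrite /elt_sigma /= (sum_mul_u p_pr (fun s => a`_s ^+ (p ^ s))).
rewrite (sum_mul_u p_pr (fun i => nth 0 (bseqrev a r) (r.-1 - i) ^+ (p ^ i))).
have [j_pow | //] := eqVneq j (p ^ logn p j)%N; rewrite /=.
have lt_logr : (logn p j < r)%N by rewrite -(ltn_exp2l _ _ (prime_gt1 p_pr)) -j_pow.
rewrite lt_logr nth_bseqrev //; case: ltnP => // le_a_log.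
by rewrite nth_default // expr0n expn_eq0 eqn0Ngt prime_gt0.
Qed.

Theorem proposition3p8 (k : closedFieldType) (p : nat) (hp : prime p)
  (hchar : p \in [pchar k]) (M : lmodType k) (D : rGaMod M) (r : nat)
  (hr : (0 < r)%N) (hdeg : deg_lt D (p ^ r)) (a : seq k) :
  let b := bseqrev a r in
  let lin : dist k := fun j => \sum_(i < r) (nth 0 b (r.-1 - i)) ^+ (p ^ i) * u k p i j in
  let psi_u := push_sigma_ir p r b (u k p r.-1) in
  (forall m, act D (elt_sigma p a) m = act D lin m) /\
  (exists c : {ffun 'I_r -> 'I_p} -> k,
      forall n, psi_u n = \sum_(l : {ffun 'I_r -> 'I_p}) c l * umon k l n) /\
  (forall c : {ffun 'I_r -> 'I_p} -> k,
      (forall n, psi_u n = \sum_(l : {ffun 'I_r -> 'I_p}) c l * umon k l n) ->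
      forall j, \sum_(i < r) (\sum_(l | linear_at l i) c l) * u k p i j = lin j).
Proof.
move=> b lin psi_u.
have lt_pred_r : (r.-1 < r)%N by rewrite prednK.
have psi_uE n : psi_u n = ((sigma_poly p b) ^+ n)`_(p ^ r.-1) by exact: push_sigma_ir_u.
split; [|split].
- apply: act_eq_deg_lt hdeg _ => j lt_j; exact: elt_sigma_bseqrev.
- apply: (umon_span hp hchar (phi := psi_u)) => n le_n.
  rewrite psi_uE coef_sigma_poly_expr_small //.
  by apply: leq_trans le_n; rewrite ltn_exp2l ?prime_gt1.
move=> c psi_uP j; apply: eq_bigr => i _; congr (_ * _).
rewrite (eq_bigl (pred1 (ulin hp i))) => [|l]; last by rewrite /= linear_atE.
have := umon_coord hp hchar psi_uP (ulin hp i).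
rewrite big_pred1_eq umon_deg_ulin umon_scale_ulin mulr1 => <-.
rewrite psi_uE coef_sigma_poly_expr_frob //; first by rewrite -ltnS prednK.
by rewrite size_bseqrev; lia.
Qed.
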